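(* Let $n\ge1$, $d\ge0$, and let $A\subseteq\mathbb{F}_3^n$ be such that there are no $a,b,c\in A$ with $b\neq c$ and $a+b+c=0$. Let $P\in\mathbb{F}_3[x_1,\dots,x_n]$ be a polynomial of total degree at most $d$, with every variable occurring with exponent at most $2$, such that $P(x)=0$ for all $x\in\mathbb{F}_3^n\setminus A$. Then the number of $a\in A$ with $P(a)\neq0$ is at most $2\,|M(n,\lfloor d/2\rfloor)|$.
   Context: $\mathbb{F}_3$ is the field of integers modulo $3$. For integers $n\ge1$ and $e\ge 0$, $M(n,e)$ denotes the set of monomials $x_1^{\alpha_1}\cdots x_n^{\alpha_n}$ with $0\le\alpha_i\le2$ for all $i$ and $\alpha_1+\dots+\alpha_n\le e$; thus $|M(n,e)|=\sum_{i=0}^{e}\binom{n}{i}_2$, where $\binom{n}{i}_2$ is the coefficient of $x^i$ in $(1+x+x^2)^n$. *)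

From HB Require Import structures.
From mathcomp Require Import all_boot all_order all_algebra.
Set Implicit Arguments. Unset Strict Implicit. Unset Printing Implicit Defensive.
Import GRing.Theory.
Local Open Scope ring_scope.

(* Exponent vectors of reduced monomials x_1^{e_1}...x_n^{e_n}, 0 <= e_i <= 2. *)
Definition mono (n : nat) := {ffun 'I_n -> 'I_3}.

Definition mdeg (n : nat) (m : mono n) : nat := (\sum_(i < n) (m i : nat))%N.

Definition Mset (n e : nat) : {set mono n} := [set m : mono n | (mdeg m <= e)%N].

(* A reduced polynomial over F_3 (each variable with exponent <= 2) is given
   by its coefficient function on monomials. *)
Definition rpoly (n : nat) := {ffun mono n -> 'F_3}.

Definition peval (n : nat) (P : rpoly n) (x : 'rV['F_3]_n) : 'F_3 :=
  \sum_(m : mono n) P m * \prod_(i < n) (x ord0 i) ^+ (m i : nat).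

(* For a, b in S := {a in A | P(a) <> 0}, consider
   the matrix M_{ab} = P(-(a+b)).  Off the diagonal -(a+b) lies outside A
   (otherwise -(a+b), a, b would be a forbidden triple), so M_{ab} = 0, while
   M_{aa} = P(-2a) = P(a) <> 0 in characteristic 3; hence rank M = |S|.
   On the other hand, expanding P(-(x+y)) gives a sum of monomials
   x^f y^g with deg f + deg g <= d, so deg f <= d/2 or deg g <= d/2; grouping
   the terms by the low-degree monomial writes M as a sum of at most
   2 |M(n, d/2)| matrices of rank one. *)
From HB Require Import structures.
From mathcomp Require Import all_boot all_order all_algebra.
From mathcomp Require Import ring zify.
Set Implicit Arguments. Unset Strict Implicit.
Import GRing.Theory.
Local Open Scope ring_scope.

Definition trinom_coef (R : comPzRingType) (m j k : nat) : R :=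
  if (j + k == m)%N then (-1) ^+ m * ('C(m, j))%:R else 0.

Lemma exprN_addE (R : comPzRingType) (m : 'I_3) (x y : R) :
  (- (x + y)) ^+ m =
  \sum_(j < 3) \sum_(k < 3) trinom_coef R m j k * x ^+ j * y ^+ k.
Proof.
rewrite !big_ord_recr !big_ord0 /= /trinom_coef.
case: m => [[|[|[|]]]] //= _; rewrite ?bin0 ?bin1 ?binn; ring.
Qed.

Lemma F3_oppDD (x : 'F_3) : - (x + x) = x.
Proof.
have three0 : (3%:R : 'F_3) = 0 by apply/val_inj.
apply/eqP; rewrite -subr_eq0 (_ : _ - x = - (x * 3%:R)); last by ring.
by rewrite three0 mulr0 oppr0.
Qed.

Lemma rowF3_oppDD n (x : 'rV['F_3]_n) : - (x + x) = x.
Proof. by apply/rowP => i; rewrite !mxE F3_oppDD. Qed.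

Lemma ltn_half_addn d a b : (d./2 < a)%N -> (d./2 < b)%N -> (d < a + b)%N.
Proof.
by have := odd_double_half d; rewrite -muln2; case: (odd d) => /=; lia.
Qed.

Lemma mxrank_sum_mul_col_row (F : fieldType) (T : finType) (B : {set T}) m n
    (u : T -> 'cV[F]_m) (v : T -> 'rV[F]_n) :
  (\rank (\sum_(t in B) u t *m v t)%R <= #|B|)%N.
Proof.
rewrite -sum1_card.
apply: (big_ind2 (fun (M : 'M[F]_(m, n)) r => \rank M <= r)%N).
- by rewrite mxrank0.
- move=> M1 r1 M2 r2 h1 h2.
  exact: leq_trans (mxrank_add _ _) (leq_add h1 h2).
- by move=> t _; apply: leq_trans (mxrankM_maxr _ _) (rank_leq_row _).
Qed.

Section ReducedPolynomials.

Variable n : nat.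
Implicit Types (P : rpoly n) (f g : mono n) (x y : 'rV['F_3]_n).

Definition mono_eval f x : 'F_3 := \prod_(i < n) x ord0 i ^+ (f i : nat).

Definition trinom_prod (m f g : mono n) : 'F_3 :=
  \prod_(i < n) trinom_coef _ (m i) (f i) (g i).

(* The coefficient of [x^f y^g] in the expansion of [P(-(x+y))]. *)
Definition oppD_coef P f g : 'F_3 := \sum_(m : mono n) P m * trinom_prod m f g.

Lemma mono_eval_oppD (m : mono n) x y :
  mono_eval m (- (x + y)) =
  \sum_(f : mono n) \sum_(g : mono n)
    trinom_prod m f g * mono_eval f x * mono_eval g y.
Proof.
rewrite /mono_eval; under eq_bigr => i _ do rewrite !mxE exprN_addE.
rewrite bigA_distr_bigA /=; apply: eq_bigr => f _.
by rewrite bigA_distr_bigA; apply: eq_bigr => g _; rewrite !big_split.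
Qed.

Lemma peval_oppD P x y :
  peval P (- (x + y)) =
  \sum_(f : mono n) \sum_(g : mono n)
    oppD_coef P f g * mono_eval f x * mono_eval g y.
Proof.
transitivity (\sum_(m : mono n) \sum_(f : mono n) \sum_(g : mono n)
   P m * trinom_prod m f g * mono_eval f x * mono_eval g y).
  apply: eq_bigr => m _; rewrite -/(mono_eval m _) mono_eval_oppD mulr_sumr.
  apply: eq_bigr => f _; rewrite mulr_sumr.
  by apply: eq_bigr => g _; rewrite !mulrA.
rewrite exchange_big; apply: eq_bigr => f _; rewrite exchange_big.
by apply: eq_bigr => g _; rewrite /oppD_coef !mulr_suml.
Qed.

Lemma oppD_coef_eq0 d P f g :
  (forall m : mono n, (d < mdeg m)%N -> P m = 0) ->
  (d < mdeg f + mdeg g)%N -> oppD_coef P f g = 0.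
Proof.
move=> hdeg hfg; apply: big1 => m _.
have [/forallP fg_m|] := boolP [forall i, (f i + g i == m i)%N].
  suff -> : P m = 0 by rewrite mul0r.
  apply: hdeg; suff -> : mdeg m = (mdeg f + mdeg g)%N by [].
  by rewrite /mdeg -big_split /=; apply: eq_bigr => i _; rewrite (eqP (fg_m i)).
rewrite negb_forall => /existsP [i fg_i].
by rewrite /trinom_prod (bigD1 i) //= /trinom_coef (negbTE fg_i) mul0r mulr0.
Qed.

Definition oppD_mx P k (s : 'I_k -> 'rV['F_3]_n) : 'M['F_3]_k :=
  \matrix_(i, j) peval P (- (s i + s j)).

Lemma oppD_mx_decomp d P k (s : 'I_k -> 'rV['F_3]_n) :
  (forall m : mono n, (d < mdeg m)%N -> P m = 0) ->
  oppD_mx P s =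
  \sum_(f in Mset n d./2) (\col_i mono_eval f (s i)) *m
      (\row_j \sum_(g : mono n) oppD_coef P f g * mono_eval g (s j)) +
  \sum_(g in Mset n d./2)
      (\col_i \sum_(f : mono n | (d./2 < mdeg f)%N)
          oppD_coef P f g * mono_eval f (s i)) *m
      (\row_j mono_eval g (s j)).
Proof.
move=> hdeg; apply/matrixP => i j; rewrite !mxE peval_oppD !summxE.
under [in RHS]eq_bigr do rewrite !mxE big_ord1 !mxE.
under [X in _ = _ + X]eq_bigr do rewrite !mxE big_ord1 !mxE.
rewrite (bigID (mem (Mset n d./2))) /=; congr (_ + _).
  by apply: eq_bigr => f _; rewrite mulr_sumr; apply: eq_bigr => g _; ring.
under [in RHS]eq_bigr do rewrite mulr_suml.
rewrite [RHS]exchange_big /=.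
apply: eq_big => [f|f f_high]; first by rewrite inE ltnNge.
rewrite (bigID (mem (Mset n d./2))) /= [X in _ + X]big1 ?addr0 // => g g_high.
rewrite (oppD_coef_eq0 hdeg) ?mul0r //.
by move: f_high g_high; rewrite !inE -!ltnNge; apply: ltn_half_addn.
Qed.

Lemma mxrank_oppD_mx d P k (s : 'I_k -> 'rV['F_3]_n) :
  (forall m : mono n, (d < mdeg m)%N -> P m = 0) ->
  (\rank (oppD_mx P s) <= 2 * #|Mset n d./2|)%N.
Proof.
move=> hdeg; rewrite (oppD_mx_decomp _ hdeg).
apply: leq_trans (mxrank_add _ _) _.
by rewrite mul2n -addnn; apply: leq_add; apply: mxrank_sum_mul_col_row.
Qed.

Lemma mxrank_oppD_mx_capset (A : {set 'rV['F_3]_n}) P k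
    (s : 'I_k -> 'rV['F_3]_n) :
  (forall a b c, a \in A -> b \in A -> c \in A -> b != c -> a + b + c != 0) ->
  (forall x, x \notin A -> peval P x = 0) ->
  injective s -> (forall i, s i \in A) -> (forall i, peval P (s i) != 0) ->
  \rank (oppD_mx P s) = k.
Proof.
move=> hA hvan s_inj sA sP.
have -> : oppD_mx P s = diag_mx (\row_i peval P (s i)).
  apply/matrixP => i j; rewrite !mxE.
  have [<-|ij] := eqVneq i j; first by rewrite rowF3_oppDD.
  rewrite mulr0n; apply: hvan; apply/negP => sumA.
  have sij : s i != s j by rewrite (inj_eq s_inj).
  have := hA _ _ _ sumA (sA i) (sA j) sij.
  by rewrite -addrA addNr eqxx.
rewrite mxrank_unit // unitmxE det_diag unitfE.
by apply/prodf_neq0 => i _; rewrite mxE sP.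
Qed.

End ReducedPolynomials.

Theorem mainTheorem4 (n d : nat) (hn : (1 <= n)%N) (A : {set 'rV['F_3]_n})
  (hA : forall a b c, a \in A -> b \in A -> c \in A -> b != c -> a + b + c != 0)
  (P : rpoly n)
  (hdeg : forall m : mono n, (d < mdeg m)%N -> P m = 0)
  (hvan : forall x : 'rV['F_3]_n, x \notin A -> peval P x = 0) :
  (#|[set a in A | peval P a != 0%R]| <= 2 * #|Mset n d./2|)%N.
Proof.
set S := [set a in A | peval P a != 0].
pose s (i : 'I_#|S|) : 'rV['F_3]_n := enum_val i.
have sS i : s i \in S := enum_valP i.
have sA i : s i \in A by move: (sS i); rewrite inE => /andP[].
have sP i : peval P (s i) != 0 by move: (sS i); rewrite inE => /andP[].
rewrite -(mxrank_oppD_mx_capset hA hvan (@enum_val_inj _ _) sA sP).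
exact: mxrank_oppD_mx.
Qed.
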